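(* Let $X,Y$ be complex Banach spaces, let $\emptyset\ne I\subseteq\mathbb R^n$ be closed with $I+I\subseteq I$, let $\mathcal B$ be any family of compact subsets of $X$ such that every $x\in X$ belongs to some $B\in\mathcal B$, and let $F:I\times X\to Y$ be uniformly continuous and $I$-asymptotically Bohr $\mathcal B$-almost periodic of type $1$. Suppose that: (a) for every $l>0$ and $M>0$ there exist $\mathbf t_0\in I$ and $k>0$ such that for every $\mathbf t\in I_{M+l}$ there exists $\mathbf t_0'\in I$ such that for every $\mathbf t_0''\in B(\mathbf t_0',l)\cap I$ we have $\mathbf t-\mathbf t_0''\in B(\mathbf t_0,kl)\cap I_M$; (b) there exists $L>0$ such that $I_{kL}\setminus I_{(k+1)L}\ne\emptyset$ for all $k\in\mathbb N$; (c) $I_M+I\subseteq I_M$ for all $M>0$. Then $F$ is $(\mathrm R,\mathcal B)$-multi-almost periodic, where $\mathrm R$ is the collection of all sequences in $I$. Furthermore, if $X=\{0\}$ and $\mathcal B=\{X\}$, then $F$ (viewed as a function $I\to Y$) is $I$-asymptotically Bohr almost periodic.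
   Context: $B(\mathbf t_0,l)$ is the closed Euclidean ball; $I_M:=\{\lambda\in I:|\lambda|\ge M\}$. $F$ is $I$-asymptotically Bohr $\mathcal B$-almost periodic of type 1 if for every $B\in\mathcal B$ and $\epsilon>0$ there exist $l>0$ and $M>0$ such that for each $\mathbf t_0\in I$ there exists $\tau\in B(\mathbf t_0,l)\cap I$ with $\|F(\mathbf t+\tau;x)-F(\mathbf t;x)\|_Y\le\epsilon$ whenever $\mathbf t,\mathbf t+\tau\in I_M$ and $x\in B$. $F$ is $(\mathrm R,\mathcal B)$-multi-almost periodic if for every $B\in\mathcal B$ and every sequence $(\mathbf b_k)\in\mathrm R$ there exist a subsequence $(\mathbf b_{k_l})$ and $F^\ast:I\times X\to Y$ with $F(\mathbf t+\mathbf b_{k_l};x)\to F^\ast(\mathbf t;x)$ uniformly for $x\in B$, $\mathbf t\in I$. A function $F:I\to Y$ is $I$-asymptotically Bohr almost periodic if $F=G+Q$ where $G:I\to Y$ is Bohr almost periodic (continuous, and for every $\epsilon>0$ there is $l>0$ such that for each $\mathbf t_0\in I$ there is $\tau\in B(\mathbf t_0,l)\cap I$ with $\|G(\mathbf t+\tau)-G(\mathbf t)\|_Y\le\epsilon$ for all $\mathbf t\in I$) and $Q:I\to Y$ is continuous with $\lim_{\mathbf t\in I,|\mathbf t|\to\infty}Q(\mathbf t)=0$. *)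

From mathcomp Require Import all_boot all_order all_algebra.
From mathcomp Require Import all_classical all_reals all_analysis.
From mathcomp Require Import complex.
Import Order.TTheory GRing.Theory Num.Theory.
Import numFieldNormedType.Exports.
Local Open Scope classical_set_scope.
Local Open Scope ring_scope.

(* Points of R^n are row vectors
   'rV[R]_n; complex Banach spaces are completeNormedModType R[i]
   (norms take values in R[i]; real bounds e are compared through (e%:C)%C). *)

Definition enorm {R : realType} {n : nat} (t : 'rV[R]_n) : R :=
  Num.sqrt (\sum_(i < n) t ord0 i ^+ 2).

Definition I_ge {R : realType} {n : nat} (I : set 'rV[R]_n) (M : R) : set 'rV[R]_n :=
  [set t | I t /\ M <= enorm t].

Definition cball {R : realType} {n : nat} (t0 : 'rV[R]_n) (l : R) : set 'rV[R]_n :=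
  [set t | enorm (t - t0) <= l].

Definition unif_cont_IX {R : realType} {n : nat}
  {X Y : normedModType R[i]} (I : set 'rV[R]_n) (F : 'rV[R]_n -> X -> Y) : Prop :=
  forall e : R, 0 < e -> exists2 d : R, 0 < d &
    forall t t' x x', I t -> I t' -> enorm (t - t') < d -> `|x - x'| < (d%:C)%C ->
      `|F t x - F t' x'| < (e%:C)%C.

Definition asympt_bohr_B_ap_type1 {R : realType} {n : nat}
  {X Y : normedModType R[i]} (I : set 'rV[R]_n) (BB : set (set X))
  (F : 'rV[R]_n -> X -> Y) : Prop :=
  forall B, BB B -> forall e : R, 0 < e ->
  exists l : R, exists M : R, 0 < l /\ 0 < M /\
    forall t0, I t0 -> exists tau, (cball t0 l `&` I) tau /\
      forall t x, I_ge I M t -> I_ge I M (t + tau) -> B x ->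
        `|F (t + tau) x - F t x| <= (e%:C)%C.

Definition R_B_multi_ap {R : realType} {n : nat}
  {X Y : normedModType R[i]} (I : set 'rV[R]_n) (BB : set (set X))
  (F : 'rV[R]_n -> X -> Y) : Prop :=
  forall B, BB B -> forall b : nat -> 'rV[R]_n, (forall k, I (b k)) ->
  exists phi : nat -> nat, (forall k, (phi k < phi k.+1)%N) /\
  exists Fs : 'rV[R]_n -> X -> Y,
    forall e : R, 0 < e -> exists N : nat, forall m, (N <= m)%N ->
      forall t x, I t -> B x -> `|F (t + b (phi m)) x - Fs t x| <= (e%:C)%C.

Definition bohr_ap {R : realType} {n : nat} {Y : normedModType R[i]}
  (I : set 'rV[R]_n) (G : 'rV[R]_n -> Y) : Prop :=
  {within I, continuous G} /\
  forall e : R, 0 < e -> exists2 l : R, 0 < l &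
    forall t0, I t0 -> exists tau, (cball t0 l `&` I) tau /\
      forall t, I t -> `|G (t + tau) - G t| <= (e%:C)%C.

Definition asympt_bohr_ap {R : realType} {n : nat} {Y : normedModType R[i]}
  (I : set 'rV[R]_n) (f : 'rV[R]_n -> Y) : Prop :=
  exists G Q : 'rV[R]_n -> Y,
    bohr_ap I G /\ {within I, continuous Q} /\
    (forall e : R, 0 < e -> exists M : R, forall t, I t -> M <= enorm t ->
        `|Q t| <= (e%:C)%C) /\
    (forall t, I t -> f t = G t + Q t).

From mathcomp Require Import all_boot all_order all_algebra.
From mathcomp Require Import all_classical all_reals all_analysis.
From mathcomp Require Import complex.
From mathcomp Require Import zify lra.
Import Order.TTheory GRing.Theory Num.Theory.
Import numFieldNormedType.Exports.
Local Open Scope classical_set_scope.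
Local Open Scope ring_scope.
Local Open Scope complex_scope.

(* Fix B and a sequence (b_k) in I.  Condition (a) and asymptotic almost
   periodicity make every translate F(. + b_k) uniformly close on I x B to a
   translate F(. + s_k) whose shift s_k lies in a fixed compact box;
   Bolzano-Weierstrass and uniform continuity then make the translates
   uniformly Cauchy along a subsequence, up to any prescribed error, and a
   diagonal extraction yields a uniformly convergent subsequence.
   For the second claim, condition (b) provides asymptotic almost periods c_m
   of F(., x) of quality 1/(m+1) with |c_m| >= m.  The uniform limit G of the
   translates F(. + c_m, x) along a subsequence is uniformly continuous and
   Bohr almost periodic, and F(., x) - G vanishes at infinity because
   F(t + c_m, x) is close to F(t, x) for large t.  This works for every x,
   not only when X = {0}. *)

Section RealNorm.
Context {R : realType} {Y : normedModType R[i]}.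
Implicit Types (a b c d : Y) (e : R).

(* Norms in a normed R[i]-module are nonnegative reals stored in R[i]; [rnorm]
   reads them in R so that real arithmetic applies. *)
Definition rnorm (y : Y) : R := complex.Re `|y|.

Lemma normr_rnorm a : `|a| = (rnorm a)%:C.
Proof. by rewrite /rnorm [LHS]complexE ger0_Im ?normr_ge0 // mulr0 addr0. Qed.

Lemma normr_lecR a e : (`|a| <= e%:C) = (rnorm a <= e).
Proof. by rewrite normr_rnorm lecR. Qed.

Lemma normr_ltcR a e : (`|a| < e%:C) = (rnorm a < e).
Proof. by rewrite normr_rnorm ltcR. Qed.

Lemma rnorm0 : rnorm 0 = 0.
Proof. by rewrite /rnorm normr0. Qed.

Lemma rnormD a b : rnorm (a + b) <= rnorm a + rnorm b.
Proof. by rewrite -lecR rmorphD /= -!normr_rnorm ler_normD. Qed.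

Lemma rnorm_distC a b : rnorm (a - b) = rnorm (b - a).
Proof. by rewrite /rnorm distrC. Qed.

Lemma rnorm_split {a b c} {e1 e2 : R} :
  rnorm (a - b) <= e1 -> rnorm (b - c) <= e2 -> rnorm (a - c) <= e1 + e2.
Proof.
by move=> ab bc; rewrite -(subrKA b); apply: le_trans (rnormD _ _) (lerD ab bc).
Qed.

Lemma rnorm_split3 {a b c d} {e1 e2 e3 : R} : rnorm (a - b) <= e1 ->
  rnorm (b - c) <= e2 -> rnorm (c - d) <= e3 -> rnorm (a - d) <= e1 + e2 + e3.
Proof. by move=> ab bc; apply: rnorm_split; apply: rnorm_split ab bc. Qed.

End RealNorm.

Lemma complex_gt0_real (R : realType) (z : R[i]) :
  0 < z -> exists2 e : R, 0 < e & z = e%:C.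
Proof.
rewrite ltcE => /andP[/eqP z_im z_re]; exists (complex.Re z) => //.
by rewrite [LHS]complexE z_im mulr0 addr0.
Qed.

Section EuclideanNorm.
Context {R : realType} {n : nat}.
Implicit Types (t : 'rV[R]_n).

Lemma enorm_ge0 t : 0 <= enorm t.
Proof. exact: sqrtr_ge0. Qed.

Lemma coord_le_mx_norm t i : `|t ord0 i| <= `|t|.
Proof.
rewrite [leRHS]/Num.Def.normr /= mx_normrE.
by apply/bigmax_geP; right; exists (ord0, i).
Qed.

Lemma coord_le_enorm t i : `|t ord0 i| <= enorm t.
Proof.
rewrite /enorm -sqrtr_sqr ler_sqrt ?sumr_ge0 // => [|j _]; last exact: sqr_ge0.
by rewrite (bigD1 i) //= lerDl sumr_ge0 // => j _; rewrite sqr_ge0.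
Qed.

Lemma mx_norm_le_enorm t : `|t| <= enorm t.
Proof.
rewrite [leLHS]/Num.Def.normr /= mx_normrE; apply/bigmax_leP; split=> [|[i j] _ /=].
  exact: enorm_ge0.
by rewrite (ord1 i) coord_le_enorm.
Qed.

Lemma enorm_le_mx_norm t : enorm t <= n.+1%:R * `|t|.
Proof.
have tn_ge0 : 0 <= n.+1%:R * `|t| by rewrite mulr_ge0.
rewrite /enorm -(ger0_norm tn_ge0) -sqrtr_sqr ler_sqrt ?sqr_ge0 //.
apply: (@le_trans _ _ (\sum_(i < n) `|t| ^+ 2)).
  apply: ler_sum => i _; rewrite -real_normK ?num_real // !expr2.
  by apply: ler_pM => //; exact: coord_le_mx_norm.
rewrite sumr_const card_ord -(mulr_natl (`|t| ^+ 2)) exprMn.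
apply: ler_wpM2r; first exact: sqr_ge0.
by rewrite -natrX ler_nat expnS; nia.
Qed.

Lemma enorm_lt_mx_norm {t} {d : R} : `|t| < d / n.+1%:R -> enorm t < d.
Proof.
by move=> td; apply: le_lt_trans (enorm_le_mx_norm t) _; rewrite mulrC -ltr_pdivlMr.
Qed.

End EuclideanNorm.

Lemma ltn_homo_infl (f : nat -> nat) :
  {homo f : i j / (i < j)%N} -> forall i, (i <= f i)%N.
Proof.
by move=> f_incr; elim=> // i IH; apply: leq_ltn_trans IH (f_incr _ _ (ltnSn i)).
Qed.

Lemma infinitely_often_subseq (P : nat -> Prop) :
  (forall N, exists2 k, (N <= k)%N & P k) ->
  exists2 th, {homo th : i j / (i < j)%N} & forall i, P (th i).
Proof.
move=> P_often; have next N : {k | (N <= k)%N & P k} := cid2 (P_often N).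
pose th := fix th i := if i is i'.+1 then s2val (next (th i').+1) else s2val (next 0%N).
exists th; first by apply: (@homo_ltn _ _ (fun a b => a < b)%N ltn_trans) => i;
  exact: s2valP (next _).
by case=> [|i]; exact: s2valP' (next _).
Qed.

Lemma compact_subseq_close {R : realType} {V : normedModType R} {A : set V}
    {s : nat -> V} {d : R} :
  compact A -> (forall k, A (s k)) -> 0 < d ->
  exists2 th, {homo th : i j / (i < j)%N} & forall i j, `|s (th i) - s (th j)| < d.
Proof.
move=> A_compact As d_gt0.
have sA : (s @ \oo) A by exists 0%N => // k _; exact: As.
have [p [_ p_cluster]] := A_compact _ _ sA.
have d2_gt0 : 0 < d / 2 by rewrite divr_gt0.
have near_p N : exists2 k, (N <= k)%N & ball p (d / 2) (s k).
  have [_ [[k Nk <-] pk]] := p_cluster [set s k | k in [set k | (N <= k)%N]] _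
    (ltac:(by exists N => // k; exists k)) (nbhsx_ballx p _ d2_gt0).
  by exists k.
have [th th_incr th_near] := infinitely_often_subseq _ near_p.
exists th => // i j; rewrite -(subrKA p) (splitr d).
apply: le_lt_trans (ler_normD _ _) _; rewrite distrC.
by move: (th_near i) (th_near j); rewrite -!ball_normE /ball_ /=; apply: ltrD.
Qed.

Lemma diagonal_extraction (Q : nat -> nat -> nat -> Prop) :
  (forall j (c : nat -> nat), exists2 th, {homo th : a b / (a < b)%N} &
     forall a a', Q j (c (th a)) (c (th a'))) ->
  exists2 phi, {homo phi : a b / (a < b)%N} &
    forall N m m', (N <= m)%N -> (N <= m')%N -> Q N (phi m) (phi m').
Proof.
move=> Q_refine.
have step j c : {th | {homo th : a b / (a < b)%N} &
    forall a a', Q j (c (th a)) (c (th a'))} := cid2 (Q_refine j c).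
pose Psi := fix Psi j :=
  if j is j'.+1 then Psi j' \o s2val (step j (Psi j')) else s2val (step 0%N id).
have Psi_incr j : {homo Psi j : a b / (a < b)%N}.
  elim: j => [|j IH] /=; first exact: (s2valP (step _ _)).
  by move=> a b ab; apply: IH; exact: (s2valP (step _ _)) _ _ ab.
have Psi_Q j a a' : Q j (Psi j a) (Psi j a').
  by case: j => [|j]; [exact: (s2valP' (step 0%N id)) |
                        exact: (s2valP' (step j.+1 (Psi j)))].
have Psi_sub j m : (j <= m)%N -> forall a, exists a', Psi m a = Psi j a'.
  elim: m => [|m IH]; first by rewrite leqn0 => /eqP -> a; exists a.
  rewrite leq_eqVlt ltnS => /orP[/eqP -> a|/IH Psi_m a]; first by exists a.
  exact: Psi_m.
exists (fun m => Psi m m).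
  apply: (@homo_ltn _ _ (fun a b => a < b)%N ltn_trans) => m /=; apply: Psi_incr.
  exact: ltn_homo_infl (s2valP (step _ _)) m.+1.
move=> N m m' Nm Nm'.
by have [a ->] := Psi_sub N m Nm m; have [a' ->] := Psi_sub N m' Nm' m'.
Qed.

Lemma unif_cauchy_unif_cvg {R : realType} {T : Type} {Y : completeNormedModType R[i]}
    (D : set T) (u : nat -> T -> Y) :
  (forall N m m', (N <= m)%N -> (N <= m')%N -> forall p, D p ->
     rnorm (u m p - u m' p) <= N.+1%:R^-1) ->
  exists G : T -> Y, forall N m, (N <= m)%N -> forall p, D p ->
     rnorm (u m p - G p) <= N.+1%:R^-1.
Proof.
move=> u_cauchy; exists (fun p => lim (u^~ p @ \oo)) => N m Nm p Dp.
have u_cvg : cvg (u^~ p @ \oo).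
  apply/cauchy_cvgP/cauchy_exP => _ /complex_gt0_real[e e_gt0 ->].
  have [N' ] := ltr_add_invr e_gt0; rewrite add0r => N'e.
  exists (u N' p); exists N' => // k /= N'k.
  by rewrite -ball_normE /ball_ /= normr_ltcR (le_lt_trans _ N'e) ?u_cauchy.
apply/ler_addgt0Pr => d d_gt0.
have [K _ uK] := (cvgrPdist_le _ _).1 u_cvg (d%:C) (ltac:(by rewrite ltcR)).
have := uK (maxn N K) (leq_maxr _ _); rewrite distrC normr_lecR.
by apply: rnorm_split; apply: u_cauchy (leq_maxl _ _) _ _.
Qed.

Definition unif_cont_on {R : realType} {n : nat} {Y : normedModType R[i]}
    (I : set 'rV[R]_n) (g : 'rV[R]_n -> Y) :=
  forall e : R, 0 < e -> exists2 d : R, 0 < d &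
    forall t t', I t -> I t' -> enorm (t - t') < d -> rnorm (g t - g t') <= e.

Section UniformContinuity.
Context {R : realType} {n : nat} {Y : normedModType R[i]} {I : set 'rV[R]_n}.
Implicit Types g h : 'rV[R]_n -> Y.

Lemma unif_cont_on_continuous {g} : unif_cont_on I g -> {within I, continuous g}.
Proof.
move=> g_uc; apply/subspace_continuousP => t It.
apply/cvgrPdist_le => _ /complex_gt0_real[e e_gt0 ->].
have [d d_gt0 g_d] := g_uc e e_gt0.
have dn_gt0 : 0 < d / n.+1%:R by rewrite divr_gt0.
apply: filterS (nbhsx_ballx t _ dn_gt0) => t' tt' It'.
by rewrite normr_lecR g_d // enorm_lt_mx_norm //; rewrite -ball_normE in tt'.
Qed.

Lemma unif_cont_onB {g h} :
  unif_cont_on I g -> unif_cont_on I h -> unif_cont_on I (fun t => g t - h t).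
Proof.
move=> g_uc h_uc e e_gt0; have e2_gt0 : 0 < e / 2 by rewrite divr_gt0.
have [d1 d1_gt0 g_d1] := g_uc _ e2_gt0; have [d2 d2_gt0 h_d2] := h_uc _ e2_gt0.
exists (Num.min d1 d2) => [|t t' It It']; first by rewrite lt_min d1_gt0.
rewrite lt_min => /andP[tt'1 tt'2]; rewrite (splitr e).
apply: (rnorm_split (b := g t' - h t)).
  by rewrite opprB addrA subrK g_d1.
by rewrite opprB addrC addrA subrK rnorm_distC h_d2.
Qed.

Lemma unif_cont_on_translate {c g} : (forall s t, I s -> I t -> I (s + t)) -> I c ->
  unif_cont_on I g -> unif_cont_on I (fun t => g (t + c)).
Proof.
move=> I_add Ic g_uc e e_gt0; have [d d_gt0 g_d] := g_uc e e_gt0.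
exists d => // t t' It It' tt'.
by apply: g_d; [exact: I_add | exact: I_add | rewrite [t' + c]addrC addrKA].
Qed.

Lemma unif_cont_on_unif_limit {u : nat -> 'rV[R]_n -> Y} {G} :
  (forall m, unif_cont_on I (u m)) ->
  (forall N m, (N <= m)%N -> forall t, I t -> rnorm (u m t - G t) <= N.+1%:R^-1) ->
  unif_cont_on I G.
Proof.
move=> u_uc u_lim e e_gt0; have e3_gt0 : 0 < e / 3 by rewrite divr_gt0.
have [N] := ltr_add_invr e3_gt0; rewrite add0r => Ne.
have [d d_gt0 uN_d] := u_uc N _ e3_gt0.
exists d => // t t' It It' tt'.
have G_uN := u_lim N N (leqnn N) t It; rewrite rnorm_distC in G_uN.
have G_uN' := u_lim N N (leqnn N) t' It'.
apply: le_trans (rnorm_split3 G_uN (uN_d _ _ It It' tt') G_uN') _.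
by move: Ne; set a := N.+1%:R^-1; lra.
Qed.
End UniformContinuity.

Definition asympt_bohr_ap_type1 {R : realType} {n : nat} {Y : normedModType R[i]}
    (I : set 'rV[R]_n) (g : 'rV[R]_n -> Y) :=
  forall e : R, 0 < e -> exists l M : R, [/\ 0 < l, 0 < M &
    forall t0, I t0 -> exists2 tau, (cball t0 l `&` I) tau &
      forall t, I_ge I M t -> I_ge I M (t + tau) -> rnorm (g (t + tau) - g t) <= e].

Lemma I_unbounded_of_shells {R : realType} {n : nat} (I : set 'rV[R]_n) :
  (exists2 L : R, 0 < L & forall k : nat, (0 < k)%N ->
     (I_ge I (k%:R * L) `\` I_ge I (k.+1%:R * L)) !=set0) ->
  forall Z : R, exists2 t, I t & Z <= enorm t.
Proof.
move=> [L L_gt0 shells] Z.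
have [t [[It kL_t] _]] := shells (Num.truncn (Z / L)).+1 isT.
exists t => //; apply: le_trans kL_t; rewrite -ler_pdivrMr //.
exact/ltW/truncnS_gt.
Qed.

Lemma large_almost_periods {R : realType} {n : nat} {Y : normedModType R[i]}
    {I : set 'rV[R]_n} {g : 'rV[R]_n -> Y} :
  (forall Z : R, exists2 t, I t & Z <= enorm t) -> asympt_bohr_ap_type1 I g ->
  forall e Z : R, 0 < e -> exists tau, [/\ I tau, Z <= enorm tau &
    exists2 M : R, 0 < M & forall t, I_ge I M t -> I_ge I M (t + tau) ->
      rnorm (g (t + tau) - g t) <= e].
Proof.
move=> I_unbounded g_ap e Z e_gt0; have [l [M [l_gt0 M_gt0 g_per]]] := g_ap e e_gt0.
have [t0 It0 t0_large] := I_unbounded (n.+1%:R * (Z + l)).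
have [tau [tau_near Itau] tau_per] := g_per t0 It0.
exists tau; split=> //; last by exists M.
have t0_mx : Z + l <= `|t0|.
  by rewrite -(ler_pM2l (ltr0Sn _ n)) (le_trans t0_large (enorm_le_mx_norm t0)).
have := ler_normD tau (t0 - tau); rewrite subrKC distrC.
have := mx_norm_le_enorm (tau - t0); have := mx_norm_le_enorm tau.
by rewrite /cball /= in tau_near; lra.
Qed.

Section AsymptoticDecomposition.
Context {R : realType} {n : nat} {Y : normedModType R[i]}.
Variables (I : set 'rV[R]_n) (g G : 'rV[R]_n -> Y) (c : nat -> 'rV[R]_n).
Hypothesis I_add : forall s t, I s -> I t -> I (s + t).
Hypothesis I_ge_add :
  forall M : R, 0 < M -> forall s t, I_ge I M s -> I t -> I_ge I M (s + t).
Hypothesis g_uc : unif_cont_on I g.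
Hypothesis g_ap : asympt_bohr_ap_type1 I g.
Hypothesis c_I : forall m, I (c m).
Hypothesis c_large : forall m, m%:R <= enorm (c m).
Hypothesis c_period : forall m, exists2 M : R, 0 < M & forall t,
  I_ge I M t -> I_ge I M (t + c m) -> rnorm (g (t + c m) - g t) <= m.+1%:R^-1.
Hypothesis G_lim : forall N m, (N <= m)%N -> forall t, I t ->
  rnorm (g (t + c m) - G t) <= N.+1%:R^-1.

Lemma limit_unif_cont : unif_cont_on I G.
Proof.
apply: (unif_cont_on_unif_limit (u := fun m t => g (t + c m)) _ G_lim) => m.
exact: unif_cont_on_translate.
Qed.

Lemma limit_bohr_ap : bohr_ap I G.
Proof.
split; first exact/unif_cont_on_continuous/limit_unif_cont.
move=> e e_gt0; have e3_gt0 : 0 < e / 3 by rewrite divr_gt0.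
have [l [M [l_gt0 M_gt0 g_per]]] := g_ap _ e3_gt0.
exists l => // t0 It0; have [tau [tau_near Itau] tau_per] := g_per t0 It0.
exists tau; split=> // t It.
have [N] := ltr_add_invr e3_gt0; rewrite add0r => Ne.
pose m := maxn N (Num.truncn M).+1.
have Mc : I_ge I M (c m).
  split=> //; apply: le_trans (c_large m); apply/ltW/(lt_le_trans (truncnS_gt M)).
  by rewrite ler_nat leq_maxr.
have G_t := G_lim N m (leq_maxl _ _) t It.
have G_ttau := G_lim N m (leq_maxl _ _) _ (I_add _ _ It Itau).
rewrite rnorm_distC in G_ttau.
have g_per_c : rnorm (g (t + tau + c m) - g (t + c m)) <= e / 3.
  rewrite addrAC; apply: tau_per; first by rewrite addrC; apply: I_ge_add.
  by apply: I_ge_add => //; rewrite addrC; apply: I_ge_add.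
rewrite normr_lecR; apply: le_trans (rnorm_split3 G_ttau g_per_c G_t) _.
by move: Ne; set a := N.+1%:R^-1; lra.
Qed.

Lemma remainder_vanishes (e : R) : 0 < e ->
  exists M : R, forall t, I t -> M <= enorm t -> rnorm (g t - G t) <= e.
Proof.
move=> e_gt0; have e2_gt0 : 0 < e / 2 by rewrite divr_gt0.
have [N] := ltr_add_invr e2_gt0; rewrite add0r => Ne.
have [M M_gt0 cN_per] := c_period N.
exists M => t It Mt; rewrite (splitr e).
apply: (rnorm_split (b := g (t + c N))).
  rewrite rnorm_distC; apply: le_trans (ltW Ne); apply: cN_per => //.
  exact: I_ge_add.
exact: le_trans (G_lim _ _ (leqnn N) _ It) (ltW Ne).
Qed.

Lemma asympt_bohr_ap_of_limit : asympt_bohr_ap I g.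
Proof.
exists G, (fun t => g t - G t); split; first exact: limit_bohr_ap.
split; first exact: unif_cont_on_continuous (unif_cont_onB g_uc limit_unif_cont).
split; last by move=> t _; rewrite subrKC.
move=> e /remainder_vanishes[M M_e]; exists M => t It Mt.
by rewrite normr_lecR M_e.
Qed.

End AsymptoticDecomposition.

Section Translates.
Context {R : realType} {n : nat}.
Context {X : normedModType R[i]} {Y : completeNormedModType R[i]}.
Variables (I : set 'rV[R]_n) (BB : set (set X)) (F : 'rV[R]_n -> X -> Y).
Hypothesis I_add : forall s t, I s -> I t -> I (s + t).
Hypothesis I_ge_add :
  forall M : R, 0 < M -> forall s t, I_ge I M s -> I t -> I_ge I M (s + t).
Hypothesis I_recentre : forall l M : R, 0 < l -> 0 < M ->
  exists t0, I t0 /\ exists k : R, 0 < k /\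
    forall t, I_ge I (M + l) t -> exists t0', I t0' /\
      forall t0'', (cball t0' l `&` I) t0'' ->
        (cball t0 (k * l) `&` I_ge I M) (t - t0'').
Hypothesis F_uc : unif_cont_IX I F.
Hypothesis F_ap : asympt_bohr_B_ap_type1 I BB F.

Lemma translates_close {e : R} : 0 < e -> exists2 d, 0 < d &
  forall s s', I s -> I s' -> enorm (s - s') < d ->
    forall t x, I t -> rnorm (F (t + s) x - F (t + s') x) <= e.
Proof.
move=> e_gt0; have [d d_gt0 F_d] := F_uc _ e_gt0.
exists d => // s s' Is Is' ss' t x It; rewrite -normr_lecR; apply/ltW/F_d.
- exact: I_add.
- exact: I_add.
- by rewrite [t + s]addrC addrKA.
- by rewrite subrr normr0 ltcR.
Qed.

Lemma bounded_shift_approx {B : set X} {e : R} : BB B -> 0 < e ->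
  exists K, forall b, I b ->
  exists s, [/\ I s, `|s| <= K &
    forall t x, I t -> B x -> rnorm (F (t + b) x - F (t + s) x) <= e].
Proof.
move=> BB_B e_gt0.
have [l [M [l_gt0 [M_gt0 F_per]]]] := F_ap _ BB_B _ e_gt0.
(* Shifts with |b| < M + l are kept; larger ones are moved by an almost
   period into the ball B(t0, k l) provided by (a). *)
have [t0 [It0 [k [k_gt0 recentre]]]] := I_recentre _ _ l_gt0 M_gt0.
have kl_gt0 := mulr_gt0 k_gt0 l_gt0; have := enorm_ge0 t0.
exists (enorm t0 + k * l + (M + l)) => b Ib.
have [b_small|b_large] := ltP (enorm b) (M + l).
  exists b; split=> //; last by move=> t x _ _; rewrite subrr rnorm0 ltW.
  by have := mx_norm_le_enorm b; lra.
have [t0' [It0' t0'_recentre]] := recentre b (conj Ib b_large).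
have [tau [[tau_near Itau] tau_per]] := F_per t0' It0'.
have [b_tau_t0 [Ib_tau Mb_tau]] := t0'_recentre tau (conj tau_near Itau).
exists (b - tau); split=> //.
  rewrite -(subrK t0 (b - tau)); apply: le_trans (ler_normD _ _) _.
  have := mx_norm_le_enorm (b - tau - t0); have := mx_norm_le_enorm t0.
  by rewrite /cball /= in b_tau_t0; lra.
move=> t x It Bx; have -> : t + b = t + (b - tau) + tau by rewrite addrA subrK.
rewrite -normr_lecR; apply: tau_per => //.
  by rewrite addrC; apply: I_ge_add.
by apply: I_ge_add => //; rewrite addrC; apply: I_ge_add.
Qed.

Lemma translates_cauchy_subseq {B : set X} {e : R} {b : nat -> 'rV[R]_n} :
  BB B -> 0 < e -> (forall k, I (b k)) ->
  exists2 th, {homo th : i j / (i < j)%N} & forall i j t x, I t -> B x ->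
    rnorm (F (t + b (th i)) x - F (t + b (th j)) x) <= e.
Proof.
move=> BB_B e_gt0 Ib; have e3_gt0 : 0 < e / 3 by rewrite divr_gt0.
have [K K_approx] := bounded_shift_approx BB_B e3_gt0.
have [s s_approx] := choice (fun k => K_approx (b k) (Ib k)).
have [d d_gt0 F_d] := translates_close e3_gt0.
pose box := [set v : 'rV[R]_n | forall i, `[- K, K]%classic (v ord0 i)].
have box_compact : compact box.
  by apply: (@rV_compact _ _ (fun=> `[- K, K]%classic)) => _; exact: segment_compact.
have s_box k : box (s k).
  have [_ sK _] := s_approx k => i /=.
  by rewrite in_itv /= -ler_norml (le_trans (coord_le_mx_norm _ _) sK).
have [th th_incr th_close] := compact_subseq_close box_compact s_box
  (ltac:(by rewrite divr_gt0) : 0 < d / n.+1%:R).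
exists th => // i j t x It Bx; have -> : e = e / 3 + e / 3 + e / 3 by lra.
have [Isi _ si_approx] := s_approx (th i); have [Isj _ sj_approx] := s_approx (th j).
apply: rnorm_split3 (si_approx t x It Bx)
  (F_d _ _ Isi Isj (enorm_lt_mx_norm (th_close i j)) t x It) _.
by rewrite rnorm_distC; apply: sj_approx.
Qed.

Lemma translates_unif_cvg {B : set X} {b : nat -> 'rV[R]_n} :
  BB B -> (forall k, I (b k)) ->
  exists2 phi, {homo phi : i j / (i < j)%N} & exists Fs : 'rV[R]_n -> X -> Y,
    forall N m, (N <= m)%N -> forall t x, I t -> B x ->
      rnorm (F (t + b (phi m)) x - Fs t x) <= N.+1%:R^-1.
Proof.
move=> BB_B Ib.
have [phi phi_incr phi_cauchy] := diagonal_extraction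
  (fun N k k' => forall t x, I t -> B x ->
     rnorm (F (t + b k) x - F (t + b k') x) <= N.+1%:R^-1)
  (fun N c => translates_cauchy_subseq (e := N.+1%:R^-1) BB_B
     (ltac:(by rewrite invr_gt0)) (fun k => Ib (c k))).
exists phi => //.
have [G G_lim] := unif_cauchy_unif_cvg [set p | I p.1 /\ B p.2]
  (fun m p => F (p.1 + b (phi m)) p.2)
  (fun N m m' Nm Nm' p '(conj Ip Bp) => phi_cauchy N m m' Nm Nm' p.1 p.2 Ip Bp).
by exists (fun t x => G (t, x)) => N m Nm t x It Bx; apply: (G_lim N m Nm (t, x)).
Qed.

Lemma R_B_multi_ap_of_translates : R_B_multi_ap I BB F.
Proof.
move=> B BB_B b Ib; have [phi phi_incr [Fs Fs_lim]] := translates_unif_cvg BB_B Ib.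
exists phi; split; first by move=> k; apply: phi_incr.
exists Fs => e e_gt0.
have [N] := ltr_add_invr e_gt0; rewrite add0r => Ne.
exists N => m Nm t x It Bx; rewrite normr_lecR.
exact: le_trans (Fs_lim N m Nm t x It Bx) (ltW Ne).
Qed.

Lemma unif_cont_on_section x : unif_cont_on I (F^~ x).
Proof.
move=> e e_gt0; have [d d_gt0 F_d] := F_uc _ e_gt0.
exists d => // t t' It It' tt'; rewrite -normr_lecR; apply/ltW/F_d => //.
by rewrite subrr normr0 ltcR.
Qed.

Lemma asympt_bohr_ap_type1_section {B x} : BB B -> B x ->
  asympt_bohr_ap_type1 I (F^~ x).
Proof.
move=> BB_B Bx e e_gt0; have [l [M [l_gt0 [M_gt0 F_per]]]] := F_ap _ BB_B _ e_gt0.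
exists l, M; split=> // t0 It0; have [tau [tau_near tau_per]] := F_per t0 It0.
by exists tau => // t Mt Mttau; rewrite -normr_lecR tau_per.
Qed.

Lemma asympt_bohr_ap_section x : (forall Z : R, exists2 t, I t & Z <= enorm t) ->
  (exists2 B, BB B & B x) -> asympt_bohr_ap I (F^~ x).
Proof.
move=> I_unbounded [B BB_B Bx]; have F_ap_x := asympt_bohr_ap_type1_section BB_B Bx.
have [c c_per] := choice (fun m => large_almost_periods I_unbounded F_ap_x
  m.+1%:R^-1 m%:R (ltac:(by rewrite invr_gt0))).
have c_I m : I (c m) by have [] := c_per m.
have [phi phi_incr [Fs Fs_lim]] := translates_unif_cvg BB_B c_I.
apply: (asympt_bohr_ap_of_limit I (F^~ x) (Fs^~ x) (c \o phi)) => //.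
- exact: unif_cont_on_section.
- by move=> m; apply: c_I.
- move=> m; have [_ c_large _] := c_per (phi m); apply: le_trans _ c_large.
  by rewrite ler_nat ltn_homo_infl.
- move=> m; have [_ _ [M M_gt0 c_close]] := c_per (phi m); exists M => // t Mt Mtc.
  apply: le_trans (c_close t Mt Mtc) _; rewrite lef_pV2 ?posrE // ler_nat ltnS.
  exact: ltn_homo_infl.
- by move=> N m Nm t It; apply: Fs_lim.
Qed.

End Translates.

Theorem theorem2p33 (R : realType) (n : nat)
  (X Y : completeNormedModType R[i]) (I : set 'rV[R]_n)
  (BB : set (set X)) (F : 'rV[R]_n -> X -> Y) :
  I !=set0 -> closed I ->
  (forall s t, I s -> I t -> I (s + t)) ->
  (forall B, BB B -> compact B) ->
  (forall x : X, exists2 B, BB B & B x) ->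
  unif_cont_IX I F ->
  asympt_bohr_B_ap_type1 I BB F ->
  (* (a) *)
  (forall l M : R, 0 < l -> 0 < M ->
     exists t0, I t0 /\ exists k : R, 0 < k /\
       forall t, I_ge I (M + l) t -> exists t0', I t0' /\
         forall t0'', (cball t0' l `&` I) t0'' ->
           (cball t0 (k * l) `&` I_ge I M) (t - t0'')) ->
  (* (b) *)
  (exists2 L : R, 0 < L & forall k : nat, (0 < k)%N ->
     (I_ge I (k%:R * L) `\` I_ge I (k.+1%:R * L)) !=set0) ->
  (* (c) *)
  (forall M : R, 0 < M -> forall s t, I_ge I M s -> I t -> I_ge I M (s + t)) ->
  R_B_multi_ap I BB F /\
  ((forall x : X, x = 0) -> BB = [set setT] ->
     asympt_bohr_ap I (fun t => F t 0)).
Proof.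
move=> _ _ I_add _ BB_cover F_uc F_ap I_recentre I_shells I_ge_add; split.
  exact: R_B_multi_ap_of_translates I_add I_ge_add I_recentre F_uc F_ap.
move=> _ _; apply: asympt_bohr_ap_section I_add I_ge_add I_recentre F_uc F_ap _ _ _.
  exact: I_unbounded_of_shells I_shells.
exact: BB_cover.
Qed.
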